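(* Assume the network is regular, and let $\alpha,\beta\in\mathcal E\sqcup\mathcal M$. (i) If $m\in\mathcal M$ and $j\in\mathcal E$ satisfy $\alpha\leadsto m$, $m\vdash j$, and $j\leadsto\beta$, then $\alpha\leadsto\beta$. (ii) If $j\in\mathcal E$ satisfies $\alpha\leadsto j$ and $j\leadsto\beta$, then $\alpha\leadsto\beta$. In particular, for reactions $j^*,j,j'\in\mathcal E$, $j^*\leadsto j\leadsto j'$ implies $j^*\leadsto j'$.
   Context: A reaction network consists of a finite set of metabolites $\mathcal M=\{1,\dots,M\}$ and a finite set of reactions $\mathcal E=\{1,\dots,E\}$. Each reaction $j$ has an input stoichiometric vector $y^j\in\mathbb R_{\ge0}^M$ and an output stoichiometric vector $\bar y^j\in\mathbb R_{\ge0}^M$. Write $m\vdash j$ iff $y^j_m\neq 0$. The stoichiometric matrix $S$ is the real $M\times E$ matrix whose $j$-th column is $S^j=\bar y^j-y^j$; it is assumed to have full rank $M$. The rate matrix $R=(r_{jm})$ is the $E\times M$ matrix whose entries $r_{jm}$ with $m\vdash j$ are independent indeterminates, and $r_{jm}=0$ whenever $m\not\vdash j$. ''Nonzero algebraically'' means nonzero as a polynomial/rational function in these indeterminates. The network is regular if $\det(SR)\ne0$ algebraically. Let $B=\begin{pmatrix}-\mathrm{id}_{\mathcal E}&R\\ S&0\end{pmatrix}$, a square matrix with rows and columns indexed by the disjoint union $\mathcal E\sqcup\mathcal M$; for a regular network it is invertible over the field of rational functions in the $r_{jm}$. For $\alpha\in\mathcal E\sqcup\mathcal M$ set $z^\alpha=-B^{-1}e_\alpha$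 (for $\alpha=m^*\in\mathcal M$ this is the response to an external feed of metabolite $m^*$), and write $\alpha\leadsto\beta$ for $\beta\in\mathcal E\sqcup\mathcal M$ if the component $z^\alpha_\beta$ is nonzero algebraically. *)

From HB Require Import structures.
From mathcomp Require Import all_boot all_order all_algebra fraction.
Set Implicit Arguments. Unset Strict Implicit. Unset Printing Implicit Defensive.
Import Order.TTheory GRing.Theory Num.Theory.
Local Open Scope ring_scope.

(* Polynomial ring in n indeterminates over R, built as iterated univariate
   polynomials:  mpoly R 0 = R, mpoly R n.+1 = (mpoly R n)[X_n]. *)
Fixpoint mpoly (R : idomainType) (n : nat) : idomainType :=
  if n is n'.+1 then [the idomainType of {poly (mpoly R n')}] else R.

(* the k-th indeterminate X_k in mpoly R n (for k < n) *)
Fixpoint mvar (R : idomainType) (n k : nat) : mpoly R n :=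
  match n return mpoly R n with
  | 0 => 0
  | n'.+1 => if k == n' then ('X : {poly mpoly R n'}) else (mvar R n' k)%:P
  end.

Fixpoint mcst (R : idomainType) (n : nat) (c : R) : mpoly R n :=
  match n return mpoly R n with
  | 0 => c
  | n'.+1 => (mcst n' c)%:P
  end.

Definition ratfun (R : idomainType) (n : nat) : fieldType := {fraction (mpoly R n)}.

Section Network.
Variables (R : realFieldType) (E M : nat).
Variables (y ybar : 'I_E -> 'I_M -> R).

Definition enters (m : 'I_M) (j : 'I_E) : bool := y j m != 0.

Definition stoich : 'M[R]_(M, E) := \matrix_(m, j) (ybar j m - y j m).

(* the field of rational functions in the indeterminates r_jm
   (indeterminate r_jm is X_(j*M+m); those with not m |- j are unused) *)
Definition RF : fieldType := ratfun R (E * M).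

Definition stoichF : 'M[RF]_(M, E) :=
  map_mx (fun c => tofrac (mcst (E * M) c)) stoich.

Definition rateF : 'M[RF]_(E, M) :=
  \matrix_(j, m) (if enters m j then tofrac (mvar R (E * M) (j * M + m)) else 0).

Definition regular : Prop := \det (stoichF *m rateF) != 0.

(* B, rows and columns indexed by E ⊔ M  ~  'I_(E + M)  (E first) *)
Definition Bmat : 'M[RF]_(E + M) :=
  block_mx (- 1%:M) rateF stoichF 0.

Definition zresp (alpha : 'I_(E + M)) : 'cV[RF]_(E + M) :=
  - (invmx Bmat *m delta_mx alpha 0).

(* alpha ~> beta  iff  z^alpha_beta nonzero algebraically *)
Definition leadsto (alpha beta : 'I_(E + M)) : bool := zresp alpha beta 0 != 0.

End Network.

From HB Require Import structures.
From mathcomp Require Import all_boot all_order all_algebra fraction.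
Import Order.TTheory GRing.Theory Num.Theory.
Set Implicit Arguments.
Unset Strict Implicit.
Unset Printing Implicit Defensive.
Local Open Scope ring_scope.

(* Every entry of B^{-1} is an entry of adj(B) divided by the nonzero
   polynomial det B, so alpha ~> beta iff adj(B)_{beta alpha} is a nonzero
   polynomial.  B depends on r_jm only through its entry (j, m), so
   differentiating adj(B) B = det(B) 1 in r_jm and multiplying by adj(B) gives
   det(B) d adj(B) + adj(B)_{. j} adj(B)_{m .} = d det(B) adj(B); hence
   adj(B)_{beta alpha} = 0 forces adj(B)_{beta j} adj(B)_{m alpha} = 0, which
   is (i).  For (ii), row j of B adj(B) = det(B) 1 expresses adj(B)_{j alpha}
   (alpha <> j) as sum_{m |- j} r_jm adj(B)_{m alpha}, so some m |- j has
   alpha ~> m, and (i) applies. *)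

Lemma mul_delta_mx_entry (T : pzRingType) m n p q (A : 'M[T]_(m, n))
    (B : 'M[T]_(p, q)) i k b a :
  (A *m delta_mx i k *m B) b a = A b i * B k a.
Proof.
rewrite -(mul_delta_mx (0 : 'I_1)) mulmxA -colE -mulmxA -rowE.
by rewrite mxE big_ord1 !mxE.
Qed.

Section Derivation.
Variables (T : idomainType) (D : {additive T -> T}).
Hypothesis derM : forall x y, D (x * y) = D x * y + x * D y.

Lemma der1 : D 1 = 0.
Proof. by have := derM 1 1; rewrite !mul1r mulr1 => /(canLR (addrK _)); rewrite subrr. Qed.

Lemma map_mx_derM {p q r} (A : 'M[T]_(p, q)) (B : 'M[T]_(q, r)) :
  map_mx D (A *m B) = map_mx D A *m B + A *m map_mx D B.
Proof.
apply/matrixP=> i k; rewrite !mxE raddf_sum -big_split.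
by apply: eq_bigr => l _; rewrite derM !mxE.
Qed.

Lemma map_mx_der_scalar n a : map_mx D (a%:M : 'M[T]_n) = (D a)%:M.
Proof. by apply/matrixP=> i k; rewrite !mxE; case: (i == k); rewrite ?raddf0. Qed.

Lemma adj_neq0_trans n (A : 'M[T]_n) i k a b :
  map_mx D A = delta_mx i k ->
  \adj A b i != 0 -> \adj A k a != 0 -> \adj A b a != 0.
Proof.
move=> DA adj_bi adj_ka; apply: contraNneq (mulf_neq0 adj_bi adj_ka) => adj_ba.
have := map_mx_derM (\adj A) A; rewrite mul_adj_mx map_mx_der_scalar DA.
move/(congr1 (mulmx^~ (\adj A))); rewrite mulmxDl -mulmxA mul_mx_adj.
rewrite mul_scalar_mx mul_mx_scalar => /matrixP/(_ b a).
have Dadj_ba : map_mx D (\adj A) b a = 0 by rewrite mxE adj_ba raddf0.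
rewrite [in LHS]mxE [in RHS]mxE mul_delta_mx_entry [X in X + _]mxE.
by rewrite Dadj_ba adj_ba !mulr0 add0r => <-.
Qed.
End Derivation.

Fixpoint mder (R : idomainType) (n k : nat) : mpoly R n -> mpoly R n :=
  match n return mpoly R n -> mpoly R n with
  | 0 => fun _ => 0
  | n'.+1 => fun p : {poly mpoly R n'} =>
      if k == n' then deriv p else map_poly (@mder R n' k) p
  end.
Arguments mder : clear implicits.

Section PartialDerivative.
Variable R : idomainType.
Implicit Types (n k : nat) (c : R).

Lemma mder0 n k : mder R n k 0 = 0.
Proof. by case: n => //= n; case: eqP; rewrite ?deriv0 ?map_poly0. Qed.

Lemma mderD n k p q : mder R n k (p + q) = mder R n k p + mder R n k q.
Proof.
elim: n => //= [|n IH] in p q *; first by rewrite addr0.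
case: eqP => _; first exact: derivD.
by apply/polyP=> i; rewrite coefD !coef_map_id0 ?mder0 // coefD IH.
Qed.

HB.instance Definition _ n k :=
  GRing.isNmodMorphism.Build _ _ (mder R n k) (mder0 n k, @mderD n k).

Lemma mderM n k p q :
  mder R n k (p * q) = mder R n k p * q + p * mder R n k q.
Proof.
elim: n => //= [|n IH] in p q *; first by rewrite mul0r mulr0 addr0.
case: eqP => _; first exact: derivM.
apply/polyP=> i; rewrite coefD !coef_map_id0 ?mder0 // !coefM.
rewrite raddf_sum -big_split /=.
by apply: eq_bigr => l _; rewrite IH !coef_map_id0 ?mder0.
Qed.

Lemma mder_cst n k c : mder R n k (mcst n c) = 0.
Proof.
elim: n => //= n IH; case: eqP => _; first exact: derivC.
by rewrite map_polyC /= IH.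
Qed.

Lemma mder1 n k : mder R n k 1 = 0.
Proof. exact: der1 (@mderM n k). Qed.

Lemma mder_var n k l : (k < n)%N -> mder R n k (mvar R n l) = (l == k)%:R.
Proof.
elim: n => //= n IH; rewrite ltnS leq_eqVlt => /orP[/eqP-> | lt_kn].
  by rewrite eqxx; case: (l == n); rewrite ?derivX ?derivC.
rewrite (ltn_eqF lt_kn); case: eqP => [->|_].
  rewrite (gtn_eqF lt_kn); apply/polyP=> i; rewrite coef_map_id0 ?raddf0 //.
  by rewrite coefX coef0; case: eqP; rewrite ?mder1 ?raddf0.
by rewrite map_polyC /= IH // polyC_natr.
Qed.

End PartialDerivative.

Lemma eqn_mulnD_small d i j l m : (l < d)%N -> (m < d)%N ->
  (i * d + l == j * d + m)%N = (i == j) && (l == m).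
Proof.
move=> lt_ld lt_md; apply/eqP/andP => [e|[/eqP-> /eqP->]] //.
have d_gt0 : (0 < d)%N by apply: leq_ltn_trans lt_ld.
have := congr1 (divn^~ d) e; have := congr1 (modn^~ d) e.
by rewrite /= !modnMDl !divnMDl // !modn_small // !divn_small // !addn0 => -> ->.
Qed.

Lemma ltn_mulnD_ord (E M : nat) (j : 'I_E) (m : 'I_M) : (j * M + m < E * M)%N.
Proof.
apply: leq_trans (_ : j.+1 * M <= E * M)%N; last by rewrite leq_mul2r ltn_ord orbT.
by rewrite mulSnr ltn_add2l.
Qed.

Lemma invmx_neq0E (F : fieldType) n (A : 'M[F]_n) i j : A \in unitmx ->
  (invmx A i j != 0) = (\adj A i j != 0).
Proof.
move=> A_unit; rewrite /invmx A_unit mxE mulf_eq0 invr_eq0.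
by have /negbTE-> : \det A != 0 by rewrite -unitfE -unitmxE.
Qed.

Section Network.
Variables (R : realFieldType) (E M : nat) (y ybar : 'I_E -> 'I_M -> R).
Local Notation P := (mpoly R (E * M)).

Definition rateP : 'M[P]_(E, M) :=
  \matrix_(j, m) (if enters y m j then mvar R (E * M) (j * M + m) else 0).

Definition stoichP : 'M[P]_(M, E) := map_mx (mcst (E * M)) (stoich y ybar).

Definition Bpoly : 'M[P]_(E + M) := block_mx (- 1%:M) rateP stoichP 0.

Lemma Bmat_tofrac : Bmat y ybar = map_mx (@tofrac P) Bpoly.
Proof.
rewrite /Bmat /Bpoly map_block_mx map_mxN map_scalar_mx rmorph1 map_mx0.
by congr block_mx; apply/matrixP=> j m; rewrite !mxE //; case: ifP; rewrite ?rmorph0.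
Qed.

Lemma Bmat_unit : regular y ybar -> Bmat y ybar \in unitmx.
Proof.
move=> reg.
have -> : Bmat y ybar = block_mx 1%:M 0 (- stoichF y ybar) 1%:M *m
    block_mx (- 1%:M) (rateF y) 0 (stoichF y ybar *m rateF y).
  rewrite mulmx_block !mul1mx !mul0mx !addr0 !mulNmx.
  by rewrite mulmxN mulmx1 opprK addNr.
rewrite unitmxE det_mulmx det_lblock det_ublock !det1 !mul1r unitfE.
by rewrite -scaleN1r detZ det1 mulr1 mulf_neq0 // expf_neq0 // oppr_eq0 oner_eq0.
Qed.

Lemma leadstoE alpha beta : regular y ybar ->
  leadsto y ybar alpha beta = (\adj Bpoly beta alpha != 0).
Proof.
move=> reg; rewrite /leadsto /zresp mxE oppr_eq0 -colE mxE.
by rewrite invmx_neq0E ?Bmat_unit // Bmat_tofrac -map_mx_adj mxE tofrac_eq0.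
Qed.

Lemma map_mder_Bpoly (j : 'I_E) (m : 'I_M) : enters y m j ->
  map_mx (mder R (E * M) (j * M + m)) Bpoly = delta_mx (lshift M j) (rshift E m).
Proof.
move=> m_j; apply/matrixP => a b; rewrite mxE.
case: (split_ordP a) => j' ->; case: (split_ordP b) => m' ->;
  rewrite ?block_mxEul ?block_mxEur ?block_mxEdl ?block_mxEdr !mxE
          ?eq_lshift ?eq_rshift ?eq_lrshift ?eq_rlshift /= ?raddf0 ?mder_cst //.
- by rewrite andbF raddfMNn /= mder1 mul0rn oppr0.
- case: ifP => [m'_j'|]; first by rewrite mder_var ?ltn_mulnD_ord // eqn_mulnD_small.
  by rewrite raddf0; case: eqP => [->|//]; case: eqP => [->|//]; rewrite m_j.
Qed.

Lemma adj_Bpoly_trans_metabolite (j : 'I_E) (m : 'I_M) a b : enters y m j ->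
  \adj Bpoly (rshift E m) a != 0 -> \adj Bpoly b (lshift M j) != 0 ->
  \adj Bpoly b a != 0.
Proof.
move=> m_j adj_ma adj_bj.
exact: (adj_neq0_trans (@mderM _ _ _) (map_mder_Bpoly m_j)) adj_bj adj_ma.
Qed.

Lemma adj_Bpoly_reaction_row (j : 'I_E) a : a != lshift M j ->
  \adj Bpoly (lshift M j) a = \sum_(m < M) rateP j m * \adj Bpoly (rshift E m) a.
Proof.
move=> a_j; move/matrixP/(_ (lshift M j) a): (mul_mx_adj Bpoly).
rewrite [RHS]mxE eq_sym (negbTE a_j) mulr0n mxE big_split_ord /=.
rewrite (bigD1 j) //= big1 ?addr0 => [|i /negbTE i_j]; last first.
  by rewrite block_mxEul !mxE eq_sym i_j oppr0 mul0r.
rewrite block_mxEul !mxE eqxx mulN1r addrC => /eqP; rewrite subr_eq0 => /eqP <-.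
by apply: eq_bigr => m _; rewrite block_mxEur.
Qed.

Lemma adj_Bpoly_trans_reaction (j : 'I_E) a b :
  \adj Bpoly (lshift M j) a != 0 -> \adj Bpoly b (lshift M j) != 0 ->
  \adj Bpoly b a != 0.
Proof.
move=> adj_ja adj_bj; have [-> //|a_j] := eqVneq a (lshift M j).
have /existsP[m] : [exists m, rateP j m * \adj Bpoly (rshift E m) a != 0].
  apply: contraNT adj_ja => /existsPn none.
  by rewrite adj_Bpoly_reaction_row // big1 // => m _; apply/eqP/negbNE/none.
rewrite mulf_eq0 negb_or => /andP[rate_jm adj_ma].
have m_j : enters y m j by move: rate_jm; rewrite mxE; case: ifP; rewrite ?eqxx.
exact: adj_Bpoly_trans_metabolite m_j adj_ma adj_bj.
Qed.
End Network.

Unset Implicit Arguments.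

Theorem theorem2p4 (R : realFieldType) (E M : nat) (y ybar : 'I_E -> 'I_M -> R)
  (hy : forall j m, 0 <= y j m) (hybar : forall j m, 0 <= ybar j m)
  (hrank : \rank (stoich y ybar) = M)
  (hreg : regular y ybar)
  (alpha beta : 'I_(E + M)) :
  (forall (m : 'I_M) (j : 'I_E),
      leadsto y ybar alpha (rshift E m) -> enters y m j ->
      leadsto y ybar (lshift M j) beta -> leadsto y ybar alpha beta)
  /\ (forall j : 'I_E,
      leadsto y ybar alpha (lshift M j) -> leadsto y ybar (lshift M j) beta ->
      leadsto y ybar alpha beta)
  /\ (forall js j j' : 'I_E,
      leadsto y ybar (lshift M js) (lshift M j) ->
      leadsto y ybar (lshift M j) (lshift M j') ->
      leadsto y ybar (lshift M js) (lshift M j')).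
Proof.
split; [|split].
- move=> m j; rewrite !leadstoE // => adj_ma m_j adj_bj.
  exact: adj_Bpoly_trans_metabolite m_j adj_ma adj_bj.
- by move=> j; rewrite !leadstoE //; apply: adj_Bpoly_trans_reaction.
- by move=> js j j'; rewrite !leadstoE //; apply: adj_Bpoly_trans_reaction.
Qed.
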